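(* The function $\tilde G$ attains a global maximum on $K$. Moreover, every global maximizer $\alpha^*=(\alpha_1^*,\dots,\alpha_N^* )$ of $\tilde G$ on $K$ satisfies exactly one of the following: (I) $\alpha^*\in\operatorname{Int}(K)$, i.e. $\alpha_j^*>0$ for all $j$ and $\sum_{j=1}^N\alpha_j^*<1$; or (II) there is $n\in\{1,\dots,N-1\}$ with $\alpha_1^*=\dots=\alpha_n^*=0$ and $(\alpha_{n+1}^*,\dots,\alpha_N^* )\in\operatorname{Int}(K_n)$, where $K_n=\{(\alpha_{n+1},\dots,\alpha_N)\in\mathbb{R}^{N-n}:\alpha_j\ge0\ \forall j,\ \sum_{j=n+1}^N\alpha_j\le1\}$. Consequently $\alpha^*$ solves either the system $\partial\tilde G/\partial\alpha_j(\alpha)=0$ for all $j\in\{1,\dots,N\}$ (case I), or the system $\alpha_1=\dots=\alpha_n=0$, $\alpha_{n+1},\dots,\alpha_N\ne0$, $\partial\tilde G/\partial\alpha_j(\alpha)=0$ for $j\in\{n+1,\dots,N\}$ (case II).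
   Context: Durable-good harvesting model. Let $N\ge1$ be an integer, $y_0>0$, $r,\rho\in\mathbb{R}$, and $0\le t_1<t_2<\dots<t_N$ (arrival times in the successive rounds). Let $K=\{\alpha=(\alpha_1,\dots,\alpha_N)\in\mathbb{R}^N:\alpha_j\ge0\ \forall j,\ \sum_{j=1}^N\alpha_j\le1\}$ and $$\tilde G(\alpha)=\sum_{n=1}^N y_0\,\alpha_n\Big(1-\sum_{i=1}^n\alpha_i\Big)e^{t_n(r-\rho)}\prod_{i=1}^{n-1}(1-\alpha_i).$$ *)

From Stdlib Require Import Reals Lra Lia Arith.
Open Scope R_scope.

(* Vectors alpha in R^N are represented by functions nat -> R, using the
   coordinates 1..N (other coordinates are irrelevant). *)

Fixpoint psum (a : nat -> R) (n : nat) : R :=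
  match n with
  | O => 0
  | S m => psum a m + a (S m)
  end.

Fixpoint pprod (a : nat -> R) (n : nat) : R :=
  match n with
  | O => 1
  | S m => pprod a m * a (S m)
  end.

Definition rsum (a : nat -> R) (m k : nat) : R := psum (fun i => a (m + i)%nat) k.

Definition Gt (N : nat) (y0 r rho : R) (t : nat -> R) (a : nat -> R) : R :=
  psum (fun n => y0 * a n * (1 - psum a n) * exp (t n * (r - rho))
                 * pprod (fun i => 1 - a i) (n - 1)) N.

Definition inK (N : nat) (a : nat -> R) : Prop :=
  (forall j, (1 <= j <= N)%nat -> 0 <= a j) /\ psum a N <= 1.

Definition inIntK (N : nat) (a : nat -> R) : Prop :=
  (forall j, (1 <= j <= N)%nat -> 0 < a j) /\ psum a N < 1.

Definition inIntKn (N n : nat) (a : nat -> R) : Prop :=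
  (forall j, (n < j <= N)%nat -> 0 < a j) /\ rsum a n (N - n) < 1.

Definition upd (a : nat -> R) (j : nat) (x : R) : nat -> R :=
  fun i => if Nat.eq_dec i j then x else a i.

Definition partial_is (F : (nat -> R) -> R) (a : nat -> R) (j : nat) (l : R) : Prop :=
  derivable_pt_lim (fun x => F (upd a j x)) (a j) l.

Definition is_global_max (N : nat) (F : (nat -> R) -> R) (a : nat -> R) : Prop :=
  inK N a /\ forall b, inK N b -> F b <= F a.

Definition caseII (N n : nat) (a : nat -> R) : Prop :=
  (1 <= n <= N - 1)%nat /\ (forall j, (1 <= j <= n)%nat -> a j = 0) /\ inIntKn N n a.

From Stdlib Require Import Reals Lra Lia Arith FunctionalExtensionality.
From Coquelicot Require Import Coquelicot.
From mathcomp Require all_boot all_order all_algebra all_classical all_reals all_analysis.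
From mathcomp Require Rstruct Rstruct_topology.
Open Scope R_scope.

(* Existence: [Gt] is continuous and [K] is compact.

   Structure: along a coordinate [k], [Gt] is a quadratic polynomial in [a k] with explicit
   derivative [dGt k a]. At a maximizer, [a k > 0] forces [dGt k a >= 0] and [sum a < 1] forces
   [dGt k a <= 0]. These first-order conditions show in turn that [sum a < 1] (at the last positive
   coordinate [m] the derivative would be [- y0 e_m a_m prod_{i<m} (1 - a_i) < 0]), that [a N > 0],
   and that the vanishing coordinates form an initial segment. When the discount
   [e_n = exp (t_n (r - rho))] is nonincreasing no coordinate vanishes, because [dGt k a] at a
   vanishing [a k] telescopes to at least [y0 e_k prod_{i<=N} (1 - a_i) (1 - sum a) > 0]; when it is
   increasing, [a k > 0 = a (k+1)] would give [dGt (k+1) a > dGt k a = 0]. An initial segment of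
   zeros followed by positive coordinates with [sum a < 1] is case (I) or case (II), and every
   positive coordinate satisfies both first-order conditions, so its partial derivative vanishes. *)

Lemma psum_ext a b n : (forall i, (1 <= i <= n)%nat -> a i = b i) -> psum a n = psum b n.
Proof.
  induction n as [|n IH]; intros H; simpl; [reflexivity|].
  rewrite IH by (intros; apply H; lia). rewrite (H (S n)) by lia. reflexivity.
Qed.

Lemma pprod_ext a b n : (forall i, (1 <= i <= n)%nat -> a i = b i) -> pprod a n = pprod b n.
Proof.
  induction n as [|n IH]; intros H; simpl; [reflexivity|].
  rewrite IH by (intros; apply H; lia). rewrite (H (S n)) by lia. reflexivity.
Qed.

Lemma psum_zero n : psum (fun _ => 0) n = 0.
Proof. induction n as [|n IH]; simpl; [|rewrite IH]; lra. Qed.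

Lemma psum_add a b n : psum (fun i => a i + b i) n = psum a n + psum b n.
Proof. induction n; simpl; lra. Qed.

Lemma psum_sub a b n : psum (fun i => a i - b i) n = psum a n - psum b n.
Proof. induction n; simpl; lra. Qed.

Lemma psum_le a b n : (forall i, (1 <= i <= n)%nat -> a i <= b i) -> psum a n <= psum b n.
Proof.
  induction n as [|n IH]; intros H; simpl; [lra|].
  assert (psum a n <= psum b n) by (apply IH; intros; apply H; lia).
  assert (a (S n) <= b (S n)) by (apply H; lia). lra.
Qed.

Lemma psum_ge0 a n : (forall i, (1 <= i <= n)%nat -> 0 <= a i) -> 0 <= psum a n.
Proof. intros H. rewrite <- (psum_zero n). apply psum_le, H. Qed.

Lemma psum_pred a n : (1 <= n)%nat -> psum a n = psum a (n - 1) + a n.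
Proof. intros Hn. destruct n as [|n]; [lia|]. rewrite Nat.sub_succ, Nat.sub_0_r. reflexivity. Qed.

Lemma pprod_pred f n : (1 <= n)%nat -> pprod f n = pprod f (n - 1) * f n.
Proof. intros Hn. destruct n as [|n]; [lia|]. rewrite Nat.sub_succ, Nat.sub_0_r. reflexivity. Qed.

Lemma psum_le_len a m n : (forall i, (1 <= i <= n)%nat -> 0 <= a i) -> (m <= n)%nat ->
  psum a m <= psum a n.
Proof.
  intros H Hmn. induction Hmn as [|n Hmn IH]; simpl; [lra|].
  assert (psum a m <= psum a n) by (apply IH; intros; apply H; lia).
  assert (0 <= a (S n)) by (apply H; lia). lra.
Qed.

Lemma psum_split a m k : psum a (m + k) = psum a m + rsum a m k.
Proof.
  unfold rsum. induction k as [|k IH]; simpl; [rewrite Nat.add_0_r; lra|].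
  rewrite Nat.add_succ_r. simpl. rewrite IH. lra.
Qed.

Lemma psum_split_at a m n : (m <= n)%nat -> psum a n = psum a m + rsum a m (n - m).
Proof. intros Hmn. rewrite <- psum_split. f_equal. lia. Qed.

Lemma psum_single f n k : (1 <= k <= n)%nat ->
  (forall i, (1 <= i <= n)%nat -> i <> k -> f i = 0) -> psum f n = f k.
Proof.
  induction n as [|n IH]; intros Hk H; [lia|]. simpl.
  destruct (Nat.eq_dec k (S n)) as [->|Hne].
  - rewrite (psum_ext f (fun _ => 0)), psum_zero by (intros; apply H; lia). lra.
  - rewrite IH by (lia || (intros; apply H; lia)). rewrite (H (S n)) by lia. lra.
Qed.

Lemma psum_indicator k u n : (1 <= k <= n)%nat ->
  psum (fun i => if Nat.eq_dec i k then u else 0) n = u.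
Proof.
  intros Hk. rewrite (psum_single _ n k Hk).
  - destruct (Nat.eq_dec k k); tauto.
  - intros i _ Hi. destruct (Nat.eq_dec i k); tauto.
Qed.

Lemma psum_ge_term a n k : (forall i, (1 <= i <= n)%nat -> 0 <= a i) -> (1 <= k <= n)%nat ->
  a k <= psum a n.
Proof.
  intros H Hk. rewrite <- (psum_indicator k (a k) n Hk). apply psum_le.
  intros i Hi. destruct (Nat.eq_dec i k) as [->|]; [lra|]. apply H, Hi.
Qed.

Lemma psum_ge_pair f n i j : (1 <= i)%nat -> (i < j <= n)%nat ->
  (forall m, (1 <= m <= n)%nat -> m <> i -> m <> j -> 0 <= f m) -> f i + f j <= psum f n.
Proof.
  intros Hi Hj H.
  rewrite <- (psum_indicator i (f i) n), <- (psum_indicator j (f j) n), <- psum_add by lia.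
  apply psum_le. intros m Hm.
  destruct (Nat.eq_dec m i), (Nat.eq_dec m j); subst; try lia; try lra.
  assert (0 <= f m) by (apply H; auto). lra.
Qed.

Lemma last_pos_index a n : (forall i, (1 <= i <= n)%nat -> 0 <= a i) -> 0 < psum a n ->
  exists m, (1 <= m <= n)%nat /\ 0 < a m /\ forall i, (m < i <= n)%nat -> a i = 0.
Proof.
  induction n as [|n IH]; simpl; intros H Hpos; [lra|].
  assert (Hn : 0 <= a (S n)) by (apply H; lia).
  destruct (Rle_lt_or_eq_dec 0 (a (S n)) Hn) as [Hlt|Heq].
  - exists (S n). repeat split; auto; intros; lia.
  - destruct IH as [m (Hm & Ham & Htail)]; [intros; apply H; lia | lra |].
    exists m. repeat split; auto; try lia.
    intros i Hi. destruct (Nat.eq_dec i (S n)) as [->|]; auto. apply Htail; lia.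
Qed.

Lemma psum_telescope_from (g : nat -> R) k n : (1 <= k <= n)%nat ->
  psum (fun m => if (m <? k)%nat then 0 else if (m =? k)%nat then g k else g m - g (m - 1)%nat) n = g n.
Proof.
  induction n as [|n IH]; intros Hk; [lia|]. cbn [psum].
  destruct (Nat.eq_dec k (S n)) as [->|Hne].
  - rewrite (psum_ext _ (fun _ => 0)), psum_zero.
    + rewrite Nat.ltb_irrefl, Nat.eqb_refl. lra.
    + intros i Hi. rewrite (proj2 (Nat.ltb_lt i (S n))) by lia. reflexivity.
  - rewrite IH, (proj2 (Nat.ltb_ge (S n) k)), (proj2 (Nat.eqb_neq (S n) k)) by lia.
    rewrite Nat.sub_succ, Nat.sub_0_r. lra.
Qed.

Lemma pprod_compl_pos a n : (forall i, (1 <= i <= n)%nat -> a i < 1) ->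
  0 < pprod (fun i => 1 - a i) n.
Proof.
  induction n as [|n IH]; intros H; simpl; [lra|].
  assert (a (S n) < 1) by (apply H; lia).
  apply Rmult_lt_0_compat; [apply IH; intros; apply H; lia | lra].
Qed.

Lemma pprod_compl_ge0 a n : (forall i, (1 <= i <= n)%nat -> a i <= 1) ->
  0 <= pprod (fun i => 1 - a i) n.
Proof.
  induction n as [|n IH]; intros H; simpl; [lra|].
  assert (a (S n) <= 1) by (apply H; lia).
  apply Rmult_le_pos; [apply IH; intros; apply H; lia | lra].
Qed.

Lemma pprod_compl_pos_of_psum a n : (forall i, (1 <= i <= n)%nat -> 0 <= a i) -> psum a n < 1 ->
  0 < pprod (fun i => 1 - a i) n.
Proof.
  intros H Hs. apply pprod_compl_pos. intros i Hi.
  pose proof (psum_ge_term a n i H Hi). lra.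
Qed.

Definition remaining (a : nat -> R) (n : nat) : R := pprod (fun i => 1 - a i) n * (1 - psum a n).

Lemma remaining_sub_succ a n :
  remaining a n - remaining a (S n) = a (S n) * pprod (fun i => 1 - a i) n * (2 - psum a (S n)).
Proof. unfold remaining. simpl. ring. Qed.

Lemma zero_prefix_pos_suffix a n : (1 <= n)%nat -> (forall i, (1 <= i <= n)%nat -> 0 <= a i) ->
  (forall i, (1 <= i)%nat -> (S i <= n)%nat -> 0 < a i -> 0 < a (S i)) -> 0 < a n ->
  exists m, (m < n)%nat /\ (forall i, (1 <= i <= m)%nat -> a i = 0) /\
            (forall i, (m < i <= n)%nat -> 0 < a i).
Proof.
  intros H1 Hnn Hsucc Hn.
  assert (Hprefix : forall j, (j <= n)%nat -> (forall i, (1 <= i <= j)%nat -> a i = 0) \/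
     exists m, (m < j)%nat /\ (forall i, (1 <= i <= m)%nat -> a i = 0) /\
               (forall i, (m < i <= j)%nat -> 0 < a i)).
  { induction j as [|j IH]; intros Hj; [left; intros; lia|].
    destruct (IH ltac:(lia)) as [Hzero | (m & Hm & Hzero & Hpos)].
    - destruct (Rle_lt_or_eq_dec _ _ (Hnn (S j) ltac:(lia))) as [Hlt|Heq].
      + right. exists j. split; [lia | split; [exact Hzero|]]. intros i Hi. replace i with (S j) by lia. exact Hlt.
      + left. intros i Hi. destruct (Nat.eq_dec i (S j)) as [->|]; auto. apply Hzero. lia.
    - right. exists m. split; [lia | split; [exact Hzero|]]. intros i Hi. destruct (Nat.eq_dec i (S j)) as [->|].
      + apply Hsucc; try lia. apply Hpos. lia.
      + apply Hpos. lia. }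
  destruct (Hprefix n (le_n n)) as [Hzero | Hm]; [|exact Hm].
  rewrite Hzero in Hn by lia. lra.
Qed.

Lemma upd_id a k : upd a k (a k) = a.
Proof.
  apply functional_extensionality; intros i. unfold upd.
  destruct (Nat.eq_dec i k); subst; reflexivity.
Qed.

Lemma upd_eq a k x : upd a k x k = x.
Proof. unfold upd. destruct (Nat.eq_dec k k); tauto. Qed.

Lemma upd_neq a k x i : i <> k -> upd a k x i = a i.
Proof. unfold upd. destruct (Nat.eq_dec i k); tauto. Qed.

Lemma psum_upd_lt a k x m : (m < k)%nat -> psum (upd a k x) m = psum a m.
Proof. intros. apply psum_ext. intros. apply upd_neq. lia. Qed.

Lemma pprod_upd_lt a k x m : (m < k)%nat ->
  pprod (fun i => 1 - upd a k x i) m = pprod (fun i => 1 - a i) m.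
Proof. intros. apply pprod_ext. intros. rewrite upd_neq by lia. reflexivity. Qed.

Lemma psum_upd a k x m : (1 <= k <= m)%nat -> psum (upd a k x) m = psum (upd a k 0) m + x.
Proof.
  induction m as [|m IH]; intros Hk; [lia|]. simpl.
  destruct (Nat.eq_dec k (S m)) as [->|Hne].
  - rewrite !upd_eq, !psum_upd_lt by lia. lra.
  - rewrite IH, !upd_neq by lia. lra.
Qed.

Lemma pprod_upd a k x m : (1 <= k <= m)%nat ->
  pprod (fun i => 1 - upd a k x i) m = pprod (fun i => 1 - upd a k 0 i) m * (1 - x).
Proof.
  induction m as [|m IH]; intros Hk; [lia|]. simpl.
  destruct (Nat.eq_dec k (S m)) as [->|Hne].
  - rewrite !upd_eq, !pprod_upd_lt by lia. lra.
  - rewrite IH, !upd_neq by lia. lra.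
Qed.

Lemma exp_le_compat x y : x <= y -> exp x <= exp y.
Proof. intros [Hlt|Heq]; [left; apply exp_increasing, Hlt | right; rewrite Heq; reflexivity]. Qed.

Lemma incr_seq_le (u : nat -> R) n : (forall i, (1 <= i)%nat -> (i < n)%nat -> u i < u (S i)) ->
  forall i j, (1 <= i)%nat -> (i <= j <= n)%nat -> u i <= u j.
Proof.
  intros Hu i j Hi [Hij Hjn]. induction Hij as [|j Hij IH]; [lra|].
  assert (u j < u (S j)) by (apply Hu; lia). assert (u i <= u j) by (apply IH; lia). lra.
Qed.

Lemma derivable_pt_lim_psum (f : R -> nat -> R) (d : nat -> R) x0 n :
  (forall m, derivable_pt_lim (fun x => f x m) x0 (d m)) ->
  derivable_pt_lim (fun x => psum (f x) n) x0 (psum d n).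
Proof.
  intros H. induction n as [|n IH]; simpl.
  - apply derivable_pt_lim_const.
  - apply (derivable_pt_lim_plus (fun x => psum (f x) n) (fun x => f x (S n))); auto.
Qed.

Lemma derivable_pt_lim_gain_right f x0 l : derivable_pt_lim f x0 l -> 0 < l ->
  forall d, 0 < d -> exists h, 0 < h < d /\ f x0 < f (x0 + h).
Proof.
  intros Hf Hl d Hd. destruct (Hf l Hl) as [del Hdel].
  assert (Hm : 0 < Rmin d del) by (apply Rmin_pos; [lra | apply cond_pos]).
  set (h := Rmin d del / 2).
  assert (Hhd : h < d) by (pose proof (Rmin_l d del); unfold h; lra).
  assert (Hhdel : h < del) by (pose proof (Rmin_r d del); unfold h; lra).
  assert (Hh : 0 < h) by (unfold h; lra).
  specialize (Hdel h ltac:(lra) ltac:(rewrite Rabs_right; lra)).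
  exists h. split; [lra|].
  apply Rabs_def2 in Hdel. destruct Hdel as [_ Hq].
  assert (Hslope : 0 < (f (x0 + h) - f x0) / h) by lra.
  apply Rmult_lt_0_compat with (r2 := h) in Hslope; [|exact Hh].
  unfold Rdiv in Hslope. rewrite Rmult_assoc, Rinv_l, Rmult_1_r in Hslope by lra.
  lra.
Qed.

Lemma derivable_pt_lim_gain_left f x0 l : derivable_pt_lim f x0 l -> l < 0 ->
  forall d, 0 < d -> exists h, 0 < h < d /\ f x0 < f (x0 - h).
Proof.
  intros Hf Hl d Hd.
  assert (Hm : derivable_pt_lim (mirr_fct f) (- x0) (- l)).
  { apply derivable_pt_lim_mirr_fwd. rewrite !Ropp_involutive. exact Hf. }
  destruct (derivable_pt_lim_gain_right _ _ _ Hm ltac:(lra) d Hd) as [h [Hh Hgain]].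
  exists h. split; [exact Hh|]. unfold mirr_fct in Hgain.
  rewrite Ropp_involutive in Hgain. replace (x0 - h) with (- (- x0 + h)) by ring. exact Hgain.
Qed.

Section Objective.

Variables (N : nat) (y0 r rho : R) (t : nat -> R).

(* The derivative in [x] of the [m]-th summand of [Gt (upd a k x)]. For [m > k] that summand
   is a constant times [(1 - S - x) (1 - x)], where [S] is the partial sum with [a k] removed. *)
Definition dGt_term (k : nat) (a : nat -> R) (x : R) (m : nat) : R :=
  if (m <? k)%nat then 0
  else if (m =? k)%nat then
    y0 * exp (t k * (r - rho)) * pprod (fun i => 1 - a i) (k - 1) * (1 - psum a (k - 1) - 2 * x)
  else
    y0 * a m * exp (t m * (r - rho)) * pprod (fun i => 1 - upd a k 0 i) (m - 1)
    * (2 * x - 2 + psum (upd a k 0) m).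

Lemma Gt_upd_derivable k a x0 : (1 <= k)%nat ->
  derivable_pt_lim (fun x => Gt N y0 r rho t (upd a k x)) x0 (psum (dGt_term k a x0) N).
Proof.
  intros Hk. unfold Gt. apply derivable_pt_lim_psum. intros m. apply is_derive_Reals.
  unfold dGt_term. destruct (Nat.ltb_spec m k) as [Hlt|Hge]; [|destruct (Nat.eqb_spec m k) as [->|Hne]].
  - eapply is_derive_ext with (f := fun _ => y0 * a m * (1 - psum a m) * exp (t m * (r - rho))
                                              * pprod (fun i => 1 - a i) (m - 1)).
    { intros x. rewrite upd_neq, psum_upd_lt, pprod_upd_lt by lia. reflexivity. }
    auto_derive; [exact I | ring].
  - destruct k as [|k]; [lia|]. rewrite Nat.sub_succ, Nat.sub_0_r.
    eapply is_derive_ext with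
      (f := fun x => y0 * x * (1 - (psum a k + x)) * exp (t (S k) * (r - rho)) * pprod (fun i => 1 - a i) k).
    { intros x. simpl. rewrite upd_eq, psum_upd_lt, pprod_upd_lt by lia. reflexivity. }
    auto_derive; [exact I | ring].
  - set (S0 := psum (upd a k 0) m). set (P0 := pprod (fun i => 1 - upd a k 0 i) (m - 1)).
    eapply is_derive_ext with
      (f := fun x => y0 * a m * (1 - (S0 + x)) * exp (t m * (r - rho)) * (P0 * (1 - x))).
    { intros x. rewrite upd_neq, (psum_upd a k x m), (pprod_upd a k x (m - 1)) by lia. reflexivity. }
    auto_derive; [exact I | ring].
Qed.

Lemma dGt_term_lt k a x m : (m < k)%nat -> dGt_term k a x m = 0.
Proof. intros Hm. unfold dGt_term. rewrite (proj2 (Nat.ltb_lt m k)) by lia. reflexivity. Qed.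

Definition dGt (k : nat) (a : nat -> R) : R := psum (dGt_term k a (a k)) N.

Lemma dGt_last k a : (1 <= k <= N)%nat -> (forall i, (k < i <= N)%nat -> a i = 0) ->
  dGt k a = y0 * exp (t k * (r - rho)) * pprod (fun i => 1 - a i) (k - 1)
            * (1 - psum a (k - 1) - 2 * a k).
Proof.
  intros Hk Htail. unfold dGt. rewrite (psum_single _ N k Hk).
  - unfold dGt_term. rewrite Nat.ltb_irrefl, Nat.eqb_refl. reflexivity.
  - intros i Hi Hik. unfold dGt_term. destruct (Nat.ltb_spec i k); [reflexivity|].
    rewrite (proj2 (Nat.eqb_neq i k)), Htail by lia. ring.
Qed.

Lemma inK_upd a k x : inK N a -> (1 <= k <= N)%nat -> 0 <= x -> psum a N - a k + x <= 1 ->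
  inK N (upd a k x).
Proof.
  intros [Hnn Hs] Hk Hx Hsum. split.
  - intros j Hj. destruct (Nat.eq_dec j k) as [->|]; [rewrite upd_eq | rewrite upd_neq]; auto.
  - pose proof (psum_upd a k (a k) N Hk) as Ha. rewrite upd_id in Ha.
    rewrite psum_upd by lia. lra.
Qed.

Section Maximizer.

Variable a : nat -> R.
Hypothesis a_max : is_global_max N (Gt N y0 r rho t) a.

Lemma max_nonneg i : (1 <= i <= N)%nat -> 0 <= a i.
Proof. apply a_max. Qed.

Lemma dGt_ge0_of_pos k : (1 <= k <= N)%nat -> 0 < a k -> 0 <= dGt k a.
Proof.
  intros Hk Ha. destruct (Rle_or_lt 0 (dGt k a)) as [|Hneg]; [assumption|exfalso].
  destruct (derivable_pt_lim_gain_left _ _ _ (Gt_upd_derivable k a (a k) ltac:(lia)) Hneg (a k) Ha)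
    as [h [Hh Hgain]].
  rewrite upd_id in Hgain. destruct a_max as [HaK Hmax]. pose proof (proj2 HaK).
  assert (HK : inK N (upd a k (a k - h))) by (apply inK_upd; auto; lra).
  pose proof (Hmax _ HK). lra.
Qed.

Lemma dGt_le0_of_slack k : (1 <= k <= N)%nat -> psum a N < 1 -> dGt k a <= 0.
Proof.
  intros Hk Hs. destruct (Rle_or_lt (dGt k a) 0) as [|Hpos]; [assumption|exfalso].
  destruct (derivable_pt_lim_gain_right _ _ _ (Gt_upd_derivable k a (a k) ltac:(lia)) Hpos
              (1 - psum a N) ltac:(lra)) as [h [Hh Hgain]].
  rewrite upd_id in Hgain. pose proof (max_nonneg k Hk). destruct a_max as [HaK Hmax].
  assert (HK : inK N (upd a k (a k + h))) by (apply inK_upd; auto; lra).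
  pose proof (Hmax _ HK). lra.
Qed.

Hypothesis y0_pos : 0 < y0.

Lemma max_psum_lt1 : psum a N < 1.
Proof.
  destruct a_max as [[Hnn Hs] _].
  destruct (Rle_lt_or_eq_dec _ _ Hs) as [|Heq]; [assumption|exfalso].
  destruct (last_pos_index a N Hnn ltac:(lra)) as [m (Hm & Ham & Htail)].
  assert (Hsm : psum a m = 1).
  { rewrite <- Heq, (psum_split_at a m N) by lia. unfold rsum.
    rewrite (psum_ext (fun i => a (m + i)%nat) (fun _ => 0)), psum_zero by (intros; apply Htail; lia). lra. }
  pose proof (dGt_ge0_of_pos m Hm Ham) as Hd. rewrite dGt_last in Hd by auto.
  rewrite psum_pred in Hsm by lia.
  assert (0 < pprod (fun i => 1 - a i) (m - 1))
    by (apply pprod_compl_pos_of_psum; [intros; apply Hnn; lia | lra]).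
  assert (0 < y0 * exp (t m * (r - rho)) * pprod (fun i => 1 - a i) (m - 1) * a m)
    by (repeat apply Rmult_lt_0_compat; auto using exp_pos).
  replace (1 - psum a (m - 1) - 2 * a m) with (- a m) in Hd by lra. lra.
Qed.

Lemma max_last_pos : (1 <= N)%nat -> 0 < a N.
Proof.
  intros HN. pose proof max_psum_lt1 as Hs.
  destruct (Rle_lt_or_eq_dec _ _ (max_nonneg N ltac:(lia))) as [|Hz]; [assumption|exfalso].
  pose proof (dGt_le0_of_slack N ltac:(lia) Hs) as Hd. rewrite dGt_last in Hd by (lia || intros; lia).
  rewrite psum_pred, <- Hz in Hs by assumption. rewrite <- Hz in Hd.
  assert (0 < pprod (fun i => 1 - a i) (N - 1))
    by (apply pprod_compl_pos_of_psum; [intros; apply max_nonneg; lia | lra]).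
  assert (0 < y0 * exp (t N * (r - rho)) * pprod (fun i => 1 - a i) (N - 1) * (1 - psum a (N - 1)))
    by (repeat apply Rmult_lt_0_compat; auto using exp_pos; lra).
  lra.
Qed.

Lemma max_coord_lt1 i : (1 <= i <= N)%nat -> a i < 1.
Proof.
  intros Hi. pose proof max_psum_lt1. pose proof (psum_ge_term a N i max_nonneg Hi). lra.
Qed.

Lemma max_pprod_compl_ge0 m : (m <= N)%nat -> 0 <= pprod (fun i => 1 - a i) m.
Proof. intros Hm. apply pprod_compl_ge0. intros i Hi. left. apply max_coord_lt1. lia. Qed.

Hypothesis t_incr : forall i, (1 <= i)%nat -> (i < N)%nat -> t i < t (S i).

Lemma dGt_term_after_zero_ge k m : r <= rho -> (1 <= k)%nat -> (k < m <= N)%nat -> a k = 0 ->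
  y0 * exp (t k * (r - rho)) * remaining a m - y0 * exp (t k * (r - rho)) * remaining a (m - 1)
  <= dGt_term k a 0 m.
Proof.
  intros Hr Hk Hm Hz. unfold dGt_term.
  rewrite (proj2 (Nat.ltb_ge m k)), (proj2 (Nat.eqb_neq m k)) by lia.
  assert (Hua : upd a k 0 = a) by (rewrite <- Hz; apply upd_id). rewrite Hua.
  pose proof (remaining_sub_succ a (m - 1)) as HD. replace (S (m - 1)) with m in HD by lia.
  set (D := a m * pprod (fun i => 1 - a i) (m - 1) * (2 - psum a m)) in HD.
  assert (0 <= D).
  { pose proof max_psum_lt1. pose proof (psum_le_len a m N max_nonneg ltac:(lia)).
    unfold D. repeat apply Rmult_le_pos; try lra; [apply max_nonneg; lia | apply max_pprod_compl_ge0; lia]. }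
  assert (exp (t m * (r - rho)) <= exp (t k * (r - rho))).
  { apply exp_le_compat. pose proof (incr_seq_le t N t_incr k m ltac:(lia) ltac:(lia)). nra. }
  assert (y0 * exp (t m * (r - rho)) * D <= y0 * exp (t k * (r - rho)) * D)
    by (apply Rmult_le_compat_r; [assumption | apply Rmult_le_compat_l; lra]).
  replace (remaining a m) with (remaining a (m - 1) - D) by lra.
  replace (y0 * a m * exp (t m * (r - rho)) * pprod (fun i => 1 - a i) (m - 1) * (2 * 0 - 2 + psum a m))
    with (- (y0 * exp (t m * (r - rho)) * D)) by (unfold D; ring).
  lra.
Qed.

Lemma max_pos_of_disc_nonincr : r <= rho -> forall k, (1 <= k <= N)%nat -> 0 < a k.
Proof.
  intros Hr k Hk.
  destruct (Rle_lt_or_eq_dec _ _ (max_nonneg k Hk)) as [|Hz]; [assumption|exfalso].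
  symmetry in Hz. pose proof max_psum_lt1 as Hs.
  set (Ek := y0 * exp (t k * (r - rho))).
  assert (Hbound : Ek * remaining a N <= dGt k a).
  { rewrite <- (psum_telescope_from (fun m => Ek * remaining a m) k N Hk).
    unfold dGt. rewrite Hz. apply psum_le. intros m Hm.
    destruct (Nat.lt_ge_cases m k); [rewrite dGt_term_lt, (proj2 (Nat.ltb_lt m k)) by lia; lra|].
    destruct (Nat.eq_dec m k) as [->|Hne].
    - unfold dGt_term, remaining, Ek. rewrite Nat.ltb_irrefl, Nat.eqb_refl.
      rewrite psum_pred, pprod_pred, Hz by lia. lra.
    - rewrite (proj2 (Nat.ltb_ge m k)), (proj2 (Nat.eqb_neq m k)) by lia.
      apply dGt_term_after_zero_ge; auto; lia. }
  assert (0 < Ek * remaining a N).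
  { apply Rmult_lt_0_compat; [apply Rmult_lt_0_compat; auto using exp_pos|].
    apply Rmult_lt_0_compat; [apply pprod_compl_pos_of_psum; auto using max_nonneg | lra]. }
  pose proof (dGt_le0_of_slack k Hk Hs). lra.
Qed.

Lemma dGt_term_succ_sub_tail k m : (1 <= k)%nat -> (S k < m <= N)%nat -> a (S k) = 0 ->
  0 <= dGt_term (S k) a 0 m - dGt_term k a (a k) m.
Proof.
  intros Hk Hm Hz. unfold dGt_term.
  rewrite (proj2 (Nat.ltb_ge m (S k))), (proj2 (Nat.eqb_neq m (S k))),
    (proj2 (Nat.ltb_ge m k)), (proj2 (Nat.eqb_neq m k)) by lia.
  assert (Hua : upd a (S k) 0 = a) by (rewrite <- Hz; apply upd_id). rewrite Hua.
  pose proof (psum_upd a k (a k) m ltac:(lia)) as HS. rewrite upd_id in HS.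
  pose proof (pprod_upd a k (a k) (m - 1) ltac:(lia)) as HP. rewrite upd_id in HP.
  assert (1 - psum a m >= 0).
  { pose proof max_psum_lt1. pose proof (psum_le_len a m N max_nonneg ltac:(lia)). lra. }
  rewrite HS, HP in *.
  set (Q := pprod (fun i => 1 - upd a k 0 i) (m - 1)). set (S' := psum (upd a k 0) m).
  assert (0 <= Q).
  { apply pprod_compl_ge0. intros i Hi. destruct (Nat.eq_dec i k) as [->|].
    - rewrite upd_eq. lra.
    - rewrite upd_neq by assumption. left. apply max_coord_lt1. lia. }
  pose proof (max_nonneg m ltac:(lia)). pose proof (max_nonneg k ltac:(lia)).
  replace (_ - _) with (y0 * a m * exp (t m * (r - rho)) * Q * a k * (1 - (S' + a k))) by ring.
  repeat apply Rmult_le_pos; auto using Rge_le; lra || (left; apply exp_pos).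
Qed.

Lemma dGt_term_succ_sub_pair k : rho < r -> (1 <= k)%nat -> (S k <= N)%nat -> 0 < a k -> a (S k) = 0 ->
  0 < (dGt_term (S k) a 0 k - dGt_term k a (a k) k)
      + (dGt_term (S k) a 0 (S k) - dGt_term k a (a k) (S k)).
Proof.
  intros Hr Hk HkN Hpos Hz. rewrite dGt_term_lt by lia. unfold dGt_term.
  rewrite !Nat.ltb_irrefl, !Nat.eqb_refl, (proj2 (Nat.ltb_ge (S k) k)), (proj2 (Nat.eqb_neq (S k) k)) by lia.
  rewrite Hz, Nat.sub_succ, Nat.sub_0_r, (psum_pred a k), (pprod_pred _ k) by lia.
  set (P := pprod (fun i => 1 - a i) (k - 1)). set (A := 1 - psum a (k - 1) - a k).
  set (e1 := exp (t k * (r - rho))). set (e2 := exp (t (S k) * (r - rho))).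
  assert (0 < P).
  { apply pprod_compl_pos_of_psum; [intros; apply max_nonneg; lia|].
    pose proof max_psum_lt1. pose proof (psum_le_len a (k - 1) N max_nonneg ltac:(lia)).
    pose proof (max_nonneg k ltac:(lia)). lra. }
  assert (0 <= A).
  { pose proof max_psum_lt1. pose proof (psum_le_len a k N max_nonneg ltac:(lia)).
    pose proof (psum_pred a k Hk). unfold A. lra. }
  assert (0 <= psum a (k - 1)) by (apply psum_ge0; intros; apply max_nonneg; lia).
  assert (0 < e1) by apply exp_pos.
  assert (e1 <= e2).
  { apply exp_le_compat. pose proof (t_incr k Hk ltac:(lia)). nra. }
  pose proof (max_coord_lt1 k ltac:(lia)).
  assert (0 < (e2 - e1) * (1 - a k) * A + e1 * a k * (1 - A)).
  { assert (0 <= (e2 - e1) * (1 - a k) * A) by (repeat apply Rmult_le_pos; lra).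
    assert (0 < e1 * a k * (1 - A)) by (repeat apply Rmult_lt_0_compat; unfold A; lra). lra. }
  replace (_ + _) with (y0 * P * ((e2 - e1) * (1 - a k) * A + e1 * a k * (1 - A))) by (unfold A; ring).
  repeat apply Rmult_lt_0_compat; assumption.
Qed.

Lemma max_pos_succ k : rho < r -> (1 <= k)%nat -> (S k <= N)%nat -> 0 < a k -> 0 < a (S k).
Proof.
  intros Hr Hk HkN Hpos.
  destruct (Rle_lt_or_eq_dec _ _ (max_nonneg (S k) ltac:(lia))) as [|Hz]; [assumption|exfalso].
  symmetry in Hz. pose proof max_psum_lt1 as Hs.
  pose proof (dGt_ge0_of_pos k ltac:(lia) Hpos).
  pose proof (dGt_le0_of_slack (S k) ltac:(lia) Hs).
  set (g := fun m => dGt_term (S k) a 0 m - dGt_term k a (a k) m).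
  assert (Hdiff : dGt (S k) a - dGt k a = psum g N) by (unfold dGt, g; rewrite psum_sub, Hz; reflexivity).
  assert (Hpair : g k + g (S k) <= psum g N).
  { apply psum_ge_pair; [assumption | lia |]. intros m Hm Hmk HmSk. unfold g.
    destruct (Nat.lt_ge_cases m k).
    - rewrite !dGt_term_lt by lia. lra.
    - apply dGt_term_succ_sub_tail; auto; lia. }
  assert (0 < g k + g (S k)) by (unfold g; apply dGt_term_succ_sub_pair; assumption).
  lra.
Qed.

Lemma max_partial_zero j : (1 <= j <= N)%nat -> 0 < a j -> partial_is (Gt N y0 r rho t) a j 0.
Proof.
  intros Hj Hpos. unfold partial_is.
  pose proof (dGt_ge0_of_pos j Hj Hpos). pose proof (dGt_le0_of_slack j Hj max_psum_lt1).
  replace 0 with (dGt j a) by lra. apply Gt_upd_derivable. lia.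
Qed.

Lemma max_zero_prefix : (1 <= N)%nat ->
  exists m, (m < N)%nat /\ (forall i, (1 <= i <= m)%nat -> a i = 0) /\
            (forall i, (m < i <= N)%nat -> 0 < a i).
Proof.
  intros HN. destruct (Rle_or_lt r rho) as [Hr|Hr].
  - exists 0%nat. split; [lia | split; [intros; lia|]].
    intros i Hi. apply max_pos_of_disc_nonincr; [exact Hr | lia].
  - apply zero_prefix_pos_suffix; auto using max_nonneg, max_last_pos.
    intros i Hi HiN. apply max_pos_succ; auto.
Qed.

Lemma max_interior_xor_caseII : (1 <= N)%nat ->
  (inIntK N a /\ ~ (exists n, caseII N n a)) \/ (~ inIntK N a /\ exists n, caseII N n a).
Proof.
  intros HN. pose proof max_psum_lt1 as Hs.
  destruct (max_zero_prefix HN) as ([|m] & HmN & Hzero & Hpos).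
  - left. split; [split; [intros; apply Hpos; lia | exact Hs]|].
    intros (n & Hn & Hz & _). pose proof (Hpos 1%nat ltac:(lia)). rewrite Hz in * by lia. lra.
  - right. split.
    + intros [Hp _]. pose proof (Hp 1%nat ltac:(lia)). rewrite Hzero in * by lia. lra.
    + exists (S m). split; [lia | split; [exact Hzero | split; [intros; apply Hpos; lia|]]].
      rewrite (psum_split_at a (S m) N), (psum_ext a (fun _ => 0)), psum_zero in Hs by (lia || auto).
      lra.
Qed.

End Maximizer.
End Objective.

Definition coord_bound (N i : nat) : R := if andb (1 <=? i)%nat (i <=? N)%nat then 1 else 0.

(* [K] restricted to vectors vanishing off [1..N]: a closed subset of a product of compact intervals. *)
Definition inK_box (N : nat) (b : nat -> R) : Prop :=
  (forall i, 0 <= b i <= coord_bound N i) /\ psum b N <= 1.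

Lemma Gt_ext N y0 r rho t a b : (forall i, (1 <= i <= N)%nat -> a i = b i) ->
  Gt N y0 r rho t a = Gt N y0 r rho t b.
Proof.
  intros H. unfold Gt. apply psum_ext. intros n Hn.
  rewrite H, (psum_ext a b n), (pprod_ext (fun i => 1 - a i) (fun i => 1 - b i) (n - 1));
    auto; intros; try rewrite H; auto; lia.
Qed.

Lemma global_max_of_box_max N (F : (nat -> R) -> R) c :
  (forall a b, (forall i, (1 <= i <= N)%nat -> a i = b i) -> F a = F b) ->
  inK_box N c -> (forall b, inK_box N b -> F b <= F c) -> is_global_max N F c.
Proof.
  intros Hext [Hc Hcs] Hmax. split; [split; [intros; apply Hc | exact Hcs]|].
  intros b [Hb Hbs].
  set (b' := fun i => if andb (1 <=? i)%nat (i <=? N)%nat then b i else 0).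
  assert (Hbb : forall i, (1 <= i <= N)%nat -> b' i = b i).
  { intros i Hi. unfold b'. rewrite (proj2 (Nat.leb_le 1 i)), (proj2 (Nat.leb_le i N)) by lia. reflexivity. }
  rewrite <- (Hext b' b Hbb). apply Hmax. split.
  - intros i. unfold b', coord_bound.
    destruct (andb (1 <=? i)%nat (i <=? N)%nat) eqn:E; [|lra].
    apply andb_prop in E. destruct E as [E1 E2]. apply Nat.leb_le in E1, E2.
    pose proof (psum_ge_term b N i Hb ltac:(lia)). pose proof (Hb i ltac:(lia)). lra.
  - rewrite (psum_ext b' b) by exact Hbb. exact Hbs.
Qed.

Module Compactness.
Import all_boot all_order all_algebra all_classical all_reals all_analysis.
Import Rstruct Rstruct_topology.
Import ArrowAsProduct.
Local Open Scope classical_set_scope.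

Lemma Rplus_continuous (f g : (nat -> R) -> R) :
  continuous f -> continuous g -> continuous (fun x => Rplus (f x) (g x)).
Proof. move=> hf hg x. exact: (@continuousD R R^o _ f g x (hf x) (hg x)). Qed.

Lemma Rminus_continuous (f g : (nat -> R) -> R) :
  continuous f -> continuous g -> continuous (fun x => Rminus (f x) (g x)).
Proof. move=> hf hg x. exact: (@continuousB R R^o _ f g x (hf x) (hg x)). Qed.

Lemma Rmult_continuous (f g : (nat -> R) -> R) :
  continuous f -> continuous g -> continuous (fun x => Rmult (f x) (g x)).
Proof. move=> hf hg x. exact: (@continuousM R _ f g x (hf x) (hg x)). Qed.

Lemma psum_continuous (F : nat -> (nat -> R) -> R) : (forall n, continuous (F n)) ->
  forall m, continuous (fun x => psum (fun n => F n x) m).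
Proof. move=> hF; elim=> [|m IH] /=; [exact: cst_continuous | exact: Rplus_continuous]. Qed.

Lemma pprod_continuous (F : nat -> (nat -> R) -> R) : (forall n, continuous (F n)) ->
  forall m, continuous (fun x => pprod (fun n => F n x) m).
Proof. move=> hF; elim=> [|m IH] /=; [exact: cst_continuous | exact: Rmult_continuous]. Qed.

Lemma coord_continuous (i : nat) : continuous (fun f : nat -> R => f i).
Proof. exact: (@proj_continuous nat (fun _ => R) i). Qed.

Lemma Gt_continuous N y0 r rho t : continuous (Gt N y0 r rho t).
Proof.
  apply: (psum_continuous (fun n a => (y0 * a n * (1 - psum a n) * exp (t n * (r - rho))
                                      * pprod (fun i => 1 - a i) (n - 1))%R)) => n.
  apply: Rmult_continuous; last first.
    apply: (pprod_continuous (fun i a => (1 - a i)%R)) => i.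
    by apply: Rminus_continuous; [exact: cst_continuous | exact: coord_continuous].
  apply: Rmult_continuous; last exact: cst_continuous.
  apply: Rmult_continuous; last first.
    apply: Rminus_continuous; first exact: cst_continuous.
    exact: (psum_continuous (fun i a => a i) coord_continuous n).
  by apply: Rmult_continuous; [exact: cst_continuous | exact: coord_continuous].
Qed.

Lemma inK_box_max_exists (N : nat) (F : (nat -> R) -> R) : continuous F ->
  exists c, inK_box N c /\ forall b, inK_box N b -> Rle (F b) (F c).
Proof.
  move=> Fcont.
  pose C := [set f : nat -> R | forall i, `[0%R, coord_bound N i] (f i)]
            `&` ((fun f => psum f N) @^-1` [set x : R | (x <= 1)%R]).
  have C_compact : compact C.
    apply: compact_closedI.
      exact: (@tychonoff nat (fun _ => R) (fun i => `[0%R, coord_bound N i])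
                (fun i => @segment_compact R 0%R (coord_bound N i))).
    apply: (@preimage_closed _ R (fun f : nat -> R => psum f N) [set x : R | (x <= 1)%R]);
      last exact: closed_le.
    move=> x _. exact: (psum_continuous (fun i a => a i) coord_continuous N).
  have boxC b : inK_box N b <-> C b.
    split.
      move=> [H1 H2]; split => /=; last exact/RleP.
      by move=> i; rewrite in_itv /=; case: (H1 i) => h1 h2; apply/andP; split; apply/RleP.
    move=> [/= H1 /RleP H2]; split => // i.
    by move: (H1 i); rewrite in_itv /= => /andP [/RleP h1 /RleP h2].
  have C0 : C !=set0.
    exists (fun _ => 0%R); apply/boxC; split.
      by move=> i; rewrite /coord_bound; case: (_ && _); split; apply: Rle_refl || apply: Rle_0_1.
    by rewrite psum_zero; apply: Rle_0_1.
  have [c Cc cmax] := @compact_EVT_max _ R F C C0 C_compact (continuous_subspaceT Fcont).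
  exists c; split; first by apply/boxC; rewrite inE in Cc.
  by move=> b /boxC bC; apply/RleP; apply: cmax; rewrite inE.
Qed.

End Compactness.

Lemma Gt_global_max_exists N y0 r rho t : exists a, is_global_max N (Gt N y0 r rho t) a.
Proof.
  destruct (Compactness.inK_box_max_exists N _ (Compactness.Gt_continuous N y0 r rho t))
    as [c [Hc Hmax]].
  exists c. apply global_max_of_box_max; auto using Gt_ext.
Qed.

Theorem proposition4 (N : nat) (y0 r rho : R) (t : nat -> R)
  (hN : (1 <= N)%nat) (hy0 : 0 < y0) (ht1 : 0 <= t 1%nat)
  (ht : forall i, (1 <= i)%nat -> (i < N)%nat -> t i < t (S i)) :
  (exists a, is_global_max N (Gt N y0 r rho t) a) /\
  (forall a, is_global_max N (Gt N y0 r rho t) a ->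
     ((inIntK N a /\ ~ (exists n, caseII N n a)) \/
      (~ inIntK N a /\ exists n, caseII N n a)) /\
     (inIntK N a ->
        forall j, (1 <= j <= N)%nat -> partial_is (Gt N y0 r rho t) a j 0) /\
     (forall n, caseII N n a ->
        (forall j, (1 <= j <= n)%nat -> a j = 0) /\
        (forall j, (n < j <= N)%nat -> a j <> 0) /\
        (forall j, (n < j <= N)%nat -> partial_is (Gt N y0 r rho t) a j 0))).
Proof.
  split; [apply Gt_global_max_exists|].
  intros a Ha. split; [|split].
  - exact (max_interior_xor_caseII N y0 r rho t a Ha hy0 ht hN).
  - intros [Hpos _] j Hj. exact (max_partial_zero N y0 r rho t a Ha hy0 j Hj (Hpos j Hj)).
  - intros n (Hn & Hzero & Hpos & _). split; [exact Hzero | split].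
    + intros j Hj. pose proof (Hpos j Hj). lra.
    + intros j Hj. apply (max_partial_zero N y0 r rho t a Ha hy0); [lia | exact (Hpos j Hj)].
Qed.
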